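(* Let $G$ be an oriented graph derived from a Burling tree $(T,r,\ell,c)$, let $H$ be a hole of $G$, let $p$ be the pivot of $H$, and let $C$ be the connected component of $G\setminus N^-[p]$ that contains $H\setminus N^-[p]$. Then every vertex of $C$ is a descendant of $p$ in $T$.
   Context: Graphs are finite, without loops or multiple edges; oriented graphs have no pair of opposite arcs; connectivity of an oriented graph refers to its underlying graph. In a rooted tree $T$ with root $r$, each non-root vertex $v$ has a parent $p(v)$; children, leaves, ancestors and descendants are as usual (every vertex is an ancestor and a descendant of itself). A branch is a sequence $v_1\dots v_k$ ($k\ge0$) with $v_i$ the parent of $v_{i+1}$; it starts at $v_1$. A Burling tree is a 4-tuple $(T,r,\ell,c)$: $T$ a rooted tree with root $r$; $\ell$ assigns to each non-leaf vertex $v$ one of its children $\ell(v)$ (the last-born of $v$); $c$ assigns to every vertex $v$ that is neither the root nor a last-born the vertex-set of a (possibly empty) branch starting at $\ell(p(v))$, and $c(v)=\emptyset$ if $v$ is the root or a last-born. The oriented graph fully derived from it has vertex-set $V(T)$ and an arc $uv$ iff $v\in c(u)$; an oriented graph is derived from the Burling tree if it is an induced subgraph of the fully derived one. $N^-[v]$ denotes $v$ together with its in-neighbors. A hole of an oriented graph is an induced cycle of length at least $4$ of its underlying graph. If $G$ is derived from $T$ and $H$ is a hole of $G$, then (as established in the paper) $H$ with the inherited orientation has exactly two sources, called its antennas, and exactly two sinks; exactly one of these sinks is adjacent to both antennas and is an ancestor in $T$ of all vertices of $H$ other than the antennas: it is the pivot of $H$; the other sink is the bottom of $H$. *)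

From mathcomp Require Import all_boot.
Set Implicit Arguments. Unset Strict Implicit. Unset Printing Implicit Defensive.

Section Burling.
Variable V : finType.

(* Rooted tree on V: root r, parent function par (par r = r by convention;
   the root's "parent" is irrelevant). Every vertex reaches r by iterating par. *)
Definition rooted_tree (r : V) (par : V -> V) : Prop :=
  par r = r /\ forall v, exists k, iter k par v = r.

Definition child (r : V) (par : V -> V) (v u : V) : bool := (u != r) && (par u == v).

Definition is_leaf (r : V) (par : V -> V) (v : V) : bool := [forall u, ~~ child r par v u].

(* a is an ancestor of v (every vertex is an ancestor of itself);
   equivalently v is a descendant of a *)
Definition ancestor (par : V -> V) (a v : V) : Prop := exists k, iter k par v = a.

Definition branch_set_from (r : V) (par : V -> V) (x : V) (B : {set V}) : Prop :=
  B = set0 \/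
  exists s : seq V, path (child r par) x s /\ B = [set y in x :: s].

Definition is_last_born (r : V) (par : V -> V) (l : V -> V) (v : V) : bool :=
  (v != r) && (v == l (par v)).

Definition burling_tree (r : V) (par : V -> V) (l : V -> V) (c : V -> {set V}) : Prop :=
  rooted_tree r par /\
  (forall v, ~~ is_leaf r par v -> child r par v (l v)) /\
  (forall v, (v == r) || is_last_born r par l v -> c v = set0) /\
  (forall v, v != r -> ~~ is_last_born r par l v ->
      branch_set_from r par (l (par v)) (c v)).

(* G is the subgraph of the fully derived graph induced by S:
   arc u v iff u, v in S and v \in c u *)
Definition arc (S : {set V}) (c : V -> {set V}) (u v : V) : bool :=
  [&& u \in S, v \in S & v \in c u].

Definition adj (S : {set V}) (c : V -> {set V}) (u v : V) : bool :=
  arc S c u v || arc S c v u.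

(* h is (the cyclic vertex sequence of) a hole of G: an induced cycle of
   length >= 4 of the underlying graph. The default x0 of nth is irrelevant
   since indices are in range. *)
Definition is_hole (S : {set V}) (c : V -> {set V}) (h : seq V) : Prop :=
  [/\ 4 <= size h, uniq h, {subset h <= S} &
      forall (x0 : V) i j, i < size h -> j < size h ->
        adj S c (nth x0 h i) (nth x0 h j) =
        (j == i.+1 %% size h) || (i == j.+1 %% size h)].

Definition hole_source (S : {set V}) (c : V -> {set V}) (h : seq V) (v : V) : bool :=
  (v \in h) && [forall w, (w \in h) ==> ~~ arc S c w v].
Definition hole_sink (S : {set V}) (c : V -> {set V}) (h : seq V) (v : V) : bool :=
  (v \in h) && [forall w, (w \in h) ==> ~~ arc S c v w].

Definition is_pivot (par : V -> V) (S : {set V}) (c : V -> {set V}) (h : seq V) (p : V) : Prop :=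
  hole_sink S c h p /\
  (forall a, hole_source S c h a -> adj S c p a) /\
  (forall v, v \in h -> ~~ hole_source S c h v -> ancestor par p v).

Definition closed_in_nbhd (S : {set V}) (c : V -> {set V}) (p : V) : {set V} :=
  p |: [set u | arc S c u p].

Definition adj_minus (S : {set V}) (c : V -> {set V}) (p : V) : rel V :=
  fun u v => [&& u \in S :\: closed_in_nbhd S c p, v \in S :\: closed_in_nbhd S c p
                & adj S c u v].

End Burling.

From Pilot Require Import Defs.
From mathcomp Require Import all_boot.

Set Implicit Arguments.
Unset Strict Implicit.
Unset Printing Implicit Defensive.

(* Being a descendant of the pivot p is preserved along the edges of
   G \ N^-[p].  Every set c v is a branch hanging from a child of par v.
   For an arc u -> v, v therefore descends from par u, which descends from p
   because u <> p.  For an arc v -> u, the ancestors of u on the branch c v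
   together with the ancestors of par v exhaust the ancestors of u; p cannot
   lie on c v (v would be an in-neighbour of p), so p is an ancestor of
   par v, hence of v.  The walk starts at a vertex of H outside N^-[p]; it is
   not an antenna, since antennas are in-neighbours of the sink p, so it
   descends from p by the definition of the pivot. *)

Section Ancestors.
Variables (V : finType) (par : V -> V).

Lemma ancestor_refl v : ancestor par v v.
Proof. by exists 0. Qed.

Lemma ancestor_trans a b d :
  ancestor par a b -> ancestor par b d -> ancestor par a d.
Proof. by move=> [k Hk] [m Hm]; exists (k + m); rewrite iterD Hm. Qed.

Lemma ancestor_parent v : ancestor par (par v) v.
Proof. by exists 1. Qed.

Lemma ancestor_parent_cases p u :
  ancestor par p u -> p = u \/ ancestor par p (par u).
Proof. by case=> [[|k] Hk]; [left | right; exists k; rewrite -iterSr]. Qed.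

Lemma ancestor_parent_neq p u :
  ancestor par p u -> u != p -> ancestor par p (par u).
Proof. by case/ancestor_parent_cases => [-> | //]; rewrite eqxx. Qed.

Lemma connect_ancestor (e : rel V) p x y :
  (forall u v, e u v -> ancestor par p u -> ancestor par p v) ->
  connect e x y -> ancestor par p x -> ancestor par p y.
Proof.
move=> He /connectP [s Hs ->] {y}.
elim: s x Hs => [|z s IH] x //= /andP [Hxz Hs] Hx.
exact: IH Hs (He _ _ Hxz Hx).
Qed.

Variable r : V.

Lemma child_path_ancestor x s y :
  path (child r par) x s -> y \in x :: s -> ancestor par x y.
Proof.
elim: s x => [|z s IH] x /=; first by rewrite inE => _ /eqP ->; exact: ancestor_refl.
case/andP=> /andP [_ /eqP Hzx] Hs; rewrite inE => /orP [/eqP -> | Hy].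
  exact: ancestor_refl.
by rewrite -Hzx; apply: ancestor_trans (ancestor_parent z) (IH z Hs Hy).
Qed.

Lemma child_path_ancestor_cases x s p u :
  path (child r par) x s -> u \in x :: s -> ancestor par p u ->
  p \in x :: s \/ ancestor par p (par x).
Proof.
elim: s x => [|z s IH] x Hs; rewrite in_cons => /orP [/eqP -> | Hu] Hpu //.
1,2: by case/ancestor_parent_cases: Hpu => [->|]; [left; exact: mem_head | right].
move: Hs => /= /andP [/andP [_ /eqP Hzx] Hs].
case: (IH z Hs Hu Hpu) => [Hp | ]; first by left; rewrite inE Hp orbT.
by rewrite Hzx => /ancestor_parent_cases [->|]; [left; exact: mem_head | right].
Qed.

End Ancestors.

Section BurlingTree.
Variables (V : finType) (r : V) (par l : V -> V) (c : V -> {set V}).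
Hypothesis burling : burling_tree r par l c.

Lemma c_branch v w : w \in c v ->
  exists s, path (child r par) (par v) (l (par v) :: s) /\
            c v = [set y in l (par v) :: s].
Proof.
have [_ [Hl [Hc0 Hc]]] := burling.
move=> Hw; have Hvr : v != r.
  by apply: contraTneq Hw => ->; rewrite Hc0 ?eqxx ?inE.
have Hlb : ~~ is_last_born r par l v.
  by apply: contraTN Hw => Hlb; rewrite Hc0 ?Hlb ?orbT ?inE.
have Hpar : ~~ is_leaf r par (par v).
  by apply/forallPn; exists v; rewrite negbK /child Hvr eqxx.
case: (Hc v Hvr Hlb) => [Hv | [s [Hs Hv]]]; first by rewrite Hv inE in Hw.
by exists s; rewrite /= Hl.
Qed.

Lemma c_ancestor_parent v w : w \in c v -> ancestor par (par v) w.
Proof.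
move=> Hw; have [s [Hs Hv]] := c_branch Hw.
apply: child_path_ancestor Hs _.
by move: Hw; rewrite Hv inE => Hw; rewrite inE Hw orbT.
Qed.

Lemma c_ancestor_cases v w p : w \in c v -> ancestor par p w ->
  p \in c v \/ ancestor par p v.
Proof.
move=> Hw Hpw; have [s [/= /andP [/andP [_ /eqP Hlv] Hs] Hv]] := c_branch Hw.
have Hws : w \in l (par v) :: s by move: Hw; rewrite Hv inE.
case: (child_path_ancestor_cases Hs Hws Hpw) => [Hp | ].
  by left; rewrite Hv inE.
by rewrite Hlv => Hpv; right; apply: ancestor_trans Hpv (ancestor_parent par v).
Qed.

Lemma adj_minus_ancestor (S : {set V}) p u v : p \in S ->
  adj_minus S c p u v -> ancestor par p u -> ancestor par p v.
Proof.
move=> pS /and3P [uS vS Huv] Hpu.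
move: uS vS; rewrite !inE => /andP [/norP [Hup _] _] /andP [/norP [_ Hvp] vS].
case/orP: Huv => /and3P [_ _ Hin].
  apply: ancestor_trans (ancestor_parent_neq Hpu Hup) _.
  exact: c_ancestor_parent Hin.
case: (c_ancestor_cases Hin Hpu) => // Hp.
by rewrite /Defs.arc vS pS Hp in Hvp.
Qed.

End BurlingTree.

Lemma pivot_source_in_nbhd (V : finType) (par : V -> V) (c : V -> {set V})
    (S : {set V}) (h : seq V) (p a : V) :
  is_pivot par S c h p -> hole_source S c h a -> a \in closed_in_nbhd S c p.
Proof.
case=> [/andP [_ /forallP Hsink] [Hsrc _]] Ha.
have /andP [ah _] := Ha.
move: (Hsrc a Ha) (Hsink a); rewrite /adj ah /= => Hpa /negbTE Hnpa.
by rewrite Hnpa /= in Hpa; rewrite !inE Hpa orbT.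
Qed.

Theorem lemma6p1 (V : finType) (r : V) (par : V -> V) (l : V -> V)
    (c : V -> {set V}) (S : {set V}) (h : seq V) (p : V) :
  burling_tree r par l c ->
  is_hole S c h ->
  is_pivot par S c h p ->
  forall x y : V,
    x \in h -> x \in S :\: closed_in_nbhd S c p ->
    connect (adj_minus S c p) x y ->
    ancestor par p y.
Proof.
move=> burling [_ _ hS _] pivot x y xh xout.
have pS : p \in S by have [/andP [ph _] _] := pivot; exact: hS.
have Hpx : ancestor par p x.
  have [_ [_ Hanc]] := pivot; apply: Hanc xh _.
  apply: contraTN xout => /(pivot_source_in_nbhd pivot) Hx.
  by rewrite inE Hx.
move=> Hxy; apply: connect_ancestor Hxy Hpx => u v Huv.
exact: (adj_minus_ancestor burling pS Huv).
Qed.
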